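(* Let $\mathcal{I}$ be a finite set of items and $\mathcal{D}$ a transaction database over $\mathcal{I}$. Let $t_o \in \mathcal{D}$ be a transaction with itemset $T_o \subseteq \mathcal{I}$, and let $\mathcal{D}^- = \mathcal{D} \setminus \{t_o\}$. Then a closed itemset $c \in \mathcal{C}(\mathcal{D})$ fails to be closed in $\mathcal{D}^-$ (i.e. $c \in \mathcal{C}(\mathcal{D}) \setminus \mathcal{C}(\mathcal{D}^-)$) if and only if there exists $c_g \in \mathcal{C}(\mathcal{D})$ with $c = c_g \cap T_o$ and $\sigma_{\mathcal{D}}(c_g) = \sigma_{\mathcal{D}}(c) - 1$. In other words, $$\mathcal{C}(\mathcal{D}) \setminus \mathcal{C}(\mathcal{D}^-) = \{c \in \mathcal{C}(\mathcal{D}) \mid \exists c_g \in \mathcal{C}(\mathcal{D}) : c = c_g \cap T_o,\ \sigma_{\mathcal{D}}(c_g) = \sigma_{\mathcal{D}}(c) - 1\}.$$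
   Context: A transaction database $\mathcal{D}$ over a finite item set $\mathcal{I}$ is a finite set of transactions, each a pair $(j, Z)$ with $j$ a transaction identifier (tid, all tids distinct) and $Z \subseteq \mathcal{I}$ an itemset. For $X \subseteq \mathcal{I}$, its support set is $\tau_{\mathcal{D}}(X) = \{ j \mid (j,Z) \in \mathcal{D},\ X \subseteq Z\}$ and its support is $\sigma_{\mathcal{D}}(X) = |\tau_{\mathcal{D}}(X)|$. An itemset $X \subseteq \mathcal{I}$ is closed in $\mathcal{D}$ if no proper superset $Y \supsetneq X$ (with $Y \subseteq \mathcal{I}$) has $\sigma_{\mathcal{D}}(Y) = \sigma_{\mathcal{D}}(X)$; $\mathcal{C}(\mathcal{D})$ denotes the family of all closed itemsets of $\mathcal{D}$ (in particular $\mathcal{I}$ itself is always closed). A closed itemset of $\mathcal{D}$ that is not closed in $\mathcal{D}^-$ is called obsolete; a $c_g$ as in the claim is called a genitor of $c$. *)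

From mathcomp Require Import all_boot.
Set Implicit Arguments. Unset Strict Implicit. Unset Printing Implicit Defensive.

(* A transaction database over items I with tids in J: a finite set of pairs
   (tid, itemset); tids are required distinct separately (distinct_tids). *)
Definition db (J I : finType) := {set (J * {set I})}.

Definition distinct_tids (J I : finType) (D : {set (J * {set I})}) : Prop :=
  forall j (Z Z' : {set I}), (j, Z) \in D -> (j, Z') \in D -> Z = Z'.

Definition tau (J I : finType) (D : {set (J * {set I})}) (X : {set I}) : {set J} :=
  [set j : J | [exists Z : {set I}, ((j, Z) \in D) && (X \subset Z)]].

Definition sigma (J I : finType) (D : {set (J * {set I})}) (X : {set I}) : nat := #|tau D X|.

Definition is_closed (J I : finType) (D : {set (J * {set I})}) (X : {set I}) : bool :=
  [forall Y : {set I}, (X \proper Y) ==> (sigma D Y != sigma D X)].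

From mathcomp Require Import all_boot.
From mathcomp Require Import zify.
Set Implicit Arguments. Unset Strict Implicit.

(* Deleting t_o lowers the support of X by one when X is contained in T_o and
   leaves it unchanged otherwise.  So a closed c of D stops being closed in D^-
   exactly when c is contained in T_o and some proper superset Y, not contained
   in T_o, has support sigma(c) - 1; the closure c_g of Y is then a genitor.  Its
   meet with T_o is c: the tid of t_o supports c_g :&: T_o but not c_g, so
   sigma(c_g :&: T_o) > sigma(c_g) = sigma(c) - 1, which the closedness of c
   forbids for a proper superset of c.  Conversely, a genitor is such a Y. *)

Section Support.
Variables (J I : finType) (D : {set (J * {set I})}).

Lemma tauS (X Y : {set I}) : X \subset Y -> tau D Y \subset tau D X.
Proof.
move=> sXY; apply/subsetP => j; rewrite !inE => /existsP[Z /andP[DZ sYZ]].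
by apply/existsP; exists Z; rewrite DZ (subset_trans sXY sYZ).
Qed.

Lemma sigmaS (X Y : {set I}) : X \subset Y -> sigma D Y <= sigma D X.
Proof. by move=> sXY; apply/subset_leq_card/tauS. Qed.

Lemma notclosedP (X : {set I}) :
  reflect (exists Y : {set I}, X \proper Y /\ sigma D Y = sigma D X) (~~ is_closed D X).
Proof.
rewrite negb_forall; apply: (iffP existsP) => [[Y]|[Y [ltXY /eqP eqs]]].
  by rewrite negb_imply negbK => /andP[ltXY /eqP eqs]; exists Y.
by exists Y; rewrite ltXY eqs.
Qed.

Lemma closed_proper_sigma_lt (X Y : {set I}) :
  is_closed D X -> X \proper Y -> sigma D Y < sigma D X.
Proof.
move=> /forallP/(_ Y)/implyP neqs ltXY.
by rewrite ltn_neqAle neqs // sigmaS // proper_sub.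
Qed.

Lemma exists_closed_superset (Y : {set I}) :
  exists Z : {set I}, [/\ is_closed D Z, Y \subset Z & sigma D Z = sigma D Y].
Proof.
pose P (Z : {set I}) := (Y \subset Z) && (sigma D Z == sigma D Y).
have PY : P Y by rewrite /P subxx eqxx.
have [Z /andP[sYZ /eqP eqsZ] maxZ] := @arg_maxnP _ Y P (fun Z => #|Z|) PY.
exists Z; split=> //; apply: contraT => /notclosedP[W [ltZW eqsW]].
have PW : P W by rewrite /P (subset_trans sYZ (proper_sub ltZW)) eqsW eqsZ eqxx.
by have := maxZ W PW; rewrite /= leqNgt proper_card.
Qed.

End Support.

Section RemoveTransaction.
Variables (J I : finType) (D : {set (J * {set I})}).
Hypothesis hD : distinct_tids D.
Variables (jo : J) (To : {set I}).
Hypothesis hto : (jo, To) \in D.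

Local Notation Dm := (D :\ (jo, To)).

Lemma in_tau_o (X : {set I}) : (jo \in tau D X) = (X \subset To).
Proof.
rewrite inE; apply/existsP/idP => [[Z /andP[DZ sXZ]]|sXT].
  by rewrite -(hD DZ hto).
by exists To; rewrite hto sXT.
Qed.

Lemma sigma_gt0 (X : {set I}) : X \subset To -> 0 < sigma D X.
Proof. by move=> sXT; apply/card_gt0P; exists jo; rewrite in_tau_o. Qed.

Lemma tau_setD1 (X : {set I}) : tau Dm X = tau D X :\ jo.
Proof.
apply/setP => j; rewrite !inE; apply/existsP/andP.
  case=> Z; rewrite !inE => /andP[/andP[neq DZ] sXZ].
  split; last by apply/existsP; exists Z; rewrite DZ.
  by apply: contraNneq neq => ej; move: DZ; rewrite ej => /hD/(_ hto) ->.
case=> nej /existsP[Z /andP[DZ sXZ]]; exists Z.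
by rewrite !inE DZ sXZ andbT xpair_eqE (negbTE nej).
Qed.

Lemma sigma_setD1 (X : {set I}) : sigma Dm X = sigma D X - (X \subset To).
Proof. by rewrite /sigma tau_setD1 (cardsD1 jo (tau D X)) in_tau_o addKn. Qed.

Lemma sigma_lt_setI (X : {set I}) : ~~ (X \subset To) -> sigma D X < sigma D (X :&: To).
Proof.
move=> nsXT; rewrite /sigma (cardsD1 jo (tau D (X :&: To))) in_tau_o subsetIr.
by rewrite ltnS subset_leq_card // subsetD1 tauS ?subsetIl // in_tau_o.
Qed.

Lemma sigma_setD1_eq (X Y : {set I}) :
    X \subset Y -> sigma D Y < sigma D X -> sigma Dm Y = sigma Dm X ->
  [/\ X \subset To, ~~ (Y \subset To) & sigma D Y = sigma D X - 1].
Proof.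
move=> sXY lts; rewrite !sigma_setD1.
have [sYT|_] := boolP (Y \subset To).
  rewrite (subset_trans sXY sYT) /= => eqs; have pos := sigma_gt0 sYT; exfalso; lia.
case: (X \subset To) => /= eqs; first by split; rewrite // -eqs subn0.
by exfalso; lia.
Qed.

Lemma genitor_setI (c cg : {set I}) :
    is_closed D c -> c \subset To -> c \subset cg -> ~~ (cg \subset To) ->
    sigma D cg = sigma D c - 1 ->
  c = cg :&: To.
Proof.
move=> closed_c sCT sCG nsGT eqs.
have sCGT : c \subset cg :&: To by rewrite subsetI sCG.
have [//|ltC] := eqVproper sCGT.
have := closed_proper_sigma_lt closed_c ltC; have := sigma_lt_setI nsGT.
have := sigma_gt0 sCT; lia.
Qed.

End RemoveTransaction.

Theorem mainTheorem2 (J I : finType) (D : {set (J * {set I})}) (hD : distinct_tids D)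
    (jo : J) (To : {set I}) (hto : (jo, To) \in D) (c : {set I}) :
  (is_closed D c /\ ~~ is_closed (D :\ (jo, To)) c) <->
  (is_closed D c /\ exists cg : {set I},
      [/\ is_closed D cg, c = cg :&: To & sigma D cg = sigma D c - 1]).
Proof.
split=> -[closed_c]; [move=> /notclosedP[Y [ltCY eqs]] | move=> [cg [_ eqC eqs]]];
  split=> //.
- have [sCT nsYT eqsY] :=
    sigma_setD1_eq hD hto (proper_sub ltCY) (closed_proper_sigma_lt closed_c ltCY) eqs.
  have [cg [closed_cg sYG eqsG]] := exists_closed_superset D Y.
  have nsGT : ~~ (cg \subset To) by apply: contra nsYT; apply: subset_trans.
  exists cg; split; rewrite ?eqsG //.
  apply: (genitor_setI hD hto closed_c sCT _ nsGT); last by rewrite eqsG.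
  exact: subset_trans (proper_sub ltCY) sYG.
- have sCT : c \subset To by rewrite eqC subsetIr.
  have pos := sigma_gt0 hD hto sCT.
  have nsGT : ~~ (cg \subset To).
    by apply/negP => /setIidPl eqI; move: eqs pos; rewrite eqC eqI; lia.
  apply/notclosedP; exists cg; rewrite !(sigma_setD1 hD hto) sCT (negbTE nsGT).
  split; last by rewrite eqs; lia.
  by rewrite properEneq eqC subsetIl andbT; apply: contraNneq nsGT => /setIidPl.
Qed.
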